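(* Let $A\in\mathcal S_n^+$ have rank $2$. Then $\operatorname{st}_+(A)=2$.
   Context: $\mathcal S_n^+$ is the set of $n\times n$ symmetric entrywise nonnegative real matrices. The SNT-rank $\operatorname{st}_+(A)$ of $A\in\mathcal S_n^+$ is the minimal $k$ such that $A=BCB^T$ with $B$ an entrywise nonnegative $n\times k$ matrix and $C$ a symmetric entrywise nonnegative $k\times k$ matrix. *)

From HB Require Import structures.
From mathcomp Require Import all_boot all_order all_algebra.
From mathcomp Require Import boolp reals.
Set Implicit Arguments. Unset Strict Implicit. Unset Printing Implicit Defensive.
Import Order.TTheory GRing.Theory Num.Theory.
Local Open Scope ring_scope.

Definition nonneg_mx (R : realType) (m k : nat) (M : 'M[R]_(m, k)) : Prop :=
  forall i j, 0 <= M i j.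

Definition SNn (R : realType) (n : nat) (A : 'M[R]_n) : Prop :=
  A^T = A /\ nonneg_mx A.

Definition snt_fact (R : realType) (n : nat) (A : 'M[R]_n) (k : nat) : Prop :=
  exists (B : 'M[R]_(n, k)) (C : 'M[R]_k),
    [/\ nonneg_mx B, nonneg_mx C, C^T = C & A = B *m C *m B^T].

Lemma snt_fact_exists (R : realType) (n : nat) (A : 'M[R]_n) :
  SNn A -> exists k, snt_fact A k.
Proof.
move=> [AT Anneg]; exists n, 1%:M, A; split => //.
- by move=> i j; rewrite mxE; case: (i == j).
- by rewrite trmx1 mul1mx mulmx1.
Qed.

Lemma snt_fact_exists_b (R : realType) (n : nat) (A : 'M[R]_n) :
  SNn A -> exists k, `[< snt_fact A k >].
Proof. by move=> /snt_fact_exists [k Hk]; exists k; apply/asboolP. Qed.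

Definition st_plus (R : realType) (n : nat) (A : 'M[R]_n) (HA : SNn A) : nat :=
  ex_minn (snt_fact_exists_b HA).

From HB Require Import structures.
From mathcomp Require Import all_boot all_order all_algebra.
From mathcomp Require Import boolp reals.
From mathcomp Require Import ring lra.
Import Order.TTheory GRing.Theory Num.Theory.
Local Open Scope ring_scope.

(* Since A = B C B^T has rank at most the inner dimension k,
   st_+(A) >= rank A = 2, so it suffices to factor A with k = 2.
   The row space of A is a plane spanned by two nonnegative rows (a basis
   extracted from the rows of A).  Normalizing them to unit sum gives points
   u, v of the simplex, and the nonnegative points of the line through u, v
   form a segment [p, q]; the two endpoints p, q generate the whole cone of
   nonnegative vectors of the plane.  Stacking p, q as a 2 x n matrix P:
   - every row of A is a nonnegative combination of p, q, so A = X P, X >= 0;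
   - X = A Q for a right inverse Q of P, so (A symmetric) the columns of X
     lie in the row space of A, hence X^T = Y P with Y >= 0;
   - then A = A^T = P^T X^T = P^T Y P, and Y = Q^T A Q is symmetric. *)

Lemma rank_le_snt_fact (R : realType) (n k : nat) (A : 'M[R]_n) :
  snt_fact A k -> (\rank A <= k)%N.
Proof.
move=> [B [C [_ _ _ ->]]].
apply: leq_trans (mxrankM_maxl _ _) _.
apply: leq_trans (mxrankM_maxl _ _) _.
exact: rank_leq_col.
Qed.

Section Segment.
Set Implicit Arguments. Unset Strict Implicit.
Variables (R : realFieldType) (I : finType).

Lemma sum0_signs (d : I -> R) (k : I) :
  \sum_i d i = 0 -> d k != 0 -> (exists i, 0 < d i) /\ (exists i, d i < 0).
Proof.
move=> sd dk; split; apply/not_existsP => H.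
- have dle0 i : 0 <= - d i by rewrite oppr_ge0 leNgt; apply/negP/H.
  have := psumr_eq0P (P := predT) (fun i _ => dle0 i).
  rewrite sumrN sd oppr0 => /(_ erefl k isT) /eqP.
  by rewrite oppr_eq0 (negbTE dk).
- have dge0 i : 0 <= d i by rewrite leNgt; apply/negP/H.
  have := psumr_eq0P (P := predT) (fun i _ => dge0 i).
  by rewrite sd => /(_ erefl k isT) /eqP; rewrite (negbTE dk).
Qed.

Variables (u v : I -> R).
Hypotheses (u_ge0 : forall i, 0 <= u i) (v_ge0 : forall i, 0 <= v i).
Hypotheses (u_sum : \sum_i u i = 1) (v_sum : \sum_i v i = 1).

Definition line_pt (l : R) (i : I) : R := u i + l * (v i - u i).

Lemma nonneg_segment : (exists i, u i != v i) ->
  exists lo hi : R, [/\ lo <= 0, 1 <= hi,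
    (forall i, 0 <= line_pt lo i), (forall i, 0 <= line_pt hi i) &
    forall l, (forall i, 0 <= line_pt l i) -> lo <= l <= hi].
Proof.
move=> [k neq_k]; rewrite /line_pt.
set d := fun i => v i - u i.
have [[i0 di0] [j0 dj0]] : (exists i, 0 < d i) /\ (exists i, d i < 0).
  apply: (@sum0_signs d k); first by rewrite /d sumrB u_sum v_sum subrr.
  by rewrite /d subr_eq0 eq_sym.
(* lo is the largest, hi the smallest, of the ratios -u i / d i over the
   indices where d is positive, resp. negative. *)
set r := fun i => - u i / d i.
have [i1 di1 maxr] :=
  real_arg_maxP (P := fun i => 0 < d i) (F := r) di0 (fun i _ => num_real (r i)).
have [i2 di2 minr] :=
  real_arg_minP (P := fun i => d i < 0) (F := r) dj0 (fun i _ => num_real (r i)).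
have rd i : d i != 0 -> r i * d i = - u i by move=> ?; rewrite /r mulrVK ?unitfE.
have lod := rd i1 (lt0r_neq0 di1); have hid := rd i2 (ltr0_neq0 di2).
have lo_le0 : r i1 <= 0 by have := u_ge0 i1; nra.
have hi_ge1 : 1 <= r i2.
  by have := u_ge0 i2; have := v_ge0 i2; rewrite /d in di2 hid; nra.
exists (r i1), (r i2); split => //.
- move=> i; rewrite -/(d i); have [di|di] := ltrP 0 (d i); last by have := u_ge0 i; nra.
  have := rd i (lt0r_neq0 di).
  have ri : r i <= r i1 by exact: maxr.
  have : 0 <= (r i1 - r i) * d i by apply: mulr_ge0; [rewrite subr_ge0 | exact: ltW].
  by rewrite mulrBl; lra.
- move=> i; rewrite -/(d i); have [di|di] := ltrP (d i) 0; last by have := u_ge0 i; nra.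
  have := rd i (ltr0_neq0 di).
  have ri : r i2 <= r i by exact: minr.
  have : 0 <= (r i - r i2) * - d i by apply: mulr_ge0; rewrite ?subr_ge0 ?oppr_ge0 // ltW.
  by rewrite mulrBl; lra.
- move=> l Hl; apply/andP; split.
    by have := Hl i1; rewrite -/(d i1); nra.
  by have := Hl i2; rewrite -/(d i2); nra.
Qed.

Lemma segment_ends_generate (lo hi : R) : lo <= 0 -> 1 <= hi ->
  (forall l, (forall i, 0 <= line_pt l i) -> lo <= l <= hi) ->
  forall s t, (forall i, 0 <= s * u i + t * v i) ->
  exists c1 c2, [/\ 0 <= c1, 0 <= c2 & forall i, s * u i + t * v i =
     c1 * line_pt lo i + c2 * line_pt hi i].
Proof.
move=> lo0 hi1 Hl s t Hw; rewrite /line_pt.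
have sw : \sum_i (s * u i + t * v i) = s + t.
  by rewrite big_split /= -!mulr_sumr u_sum v_sum !mulr1.
have [m_gt0 | m_le0] := ltrP 0 (s + t); last first.
  have m0 : s + t = 0 by apply/le_anti; rewrite m_le0 -sw sumr_ge0.
  exists 0, 0; split => // i; rewrite !mul0r addr0.
  by apply: (psumr_eq0P (P := predT) (fun i _ => Hw i)) => //; rewrite sw.
(* s u + t v is (s + t) times the point of parameter l = t / (s + t). *)
set m := s + t in m_gt0 sw *; set l := t / m.
have tl : t = l * m by rewrite /l mulrVK // unitfE gt_eqF.
have sl : s = m - l * m by rewrite -tl /m addrK.
have /andP [lo_l l_hi] : lo <= l <= hi.
  apply: Hl => i; have := Hw i; rewrite sl tl.
  have -> : (m - l * m) * u i + l * m * v i = m * (u i + l * (v i - u i)) by ring.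
  by rewrite pmulr_rge0.
have hl : 0 < hi - lo by lra.
exists (m * (hi - l) / (hi - lo)), (m * (l - lo) / (hi - lo)); split.
- by apply: divr_ge0; [apply: mulr_ge0 |]; lra.
- by apply: divr_ge0; [apply: mulr_ge0 |]; lra.
- by move=> i; rewrite sl tl; field; lra.
Qed.

End Segment.

Section NonnegCone.
Set Implicit Arguments. Unset Strict Implicit.
Variable R : realType.
Implicit Types (m n k : nat).

Lemma mulmx_row2 m (c : 'rV[R]_2) (M : 'M[R]_(2, m)) j :
  (c *m M) 0 j = c 0 0 * M 0 j + c 0 ord_max * M ord_max j.
Proof.
rewrite mxE big_ord_recl big_ord1.
by have -> : lift ord0 (@ord0 0) = ord_max by apply: val_inj.
Qed.

Lemma nonneg_row_basis m n (A : 'M[R]_(m, n)) : nonneg_mx A ->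
  exists S : 'M[R]_(\rank A, n), nonneg_mx S /\ (S == A)%MS.
Proof.
move=> A_ge0; exists (rowsub (maxrankfun A) A); split.
  by move=> i j; rewrite mxE.
exact/eqmxP/eq_maxrowsub.
Qed.

(* A row-free nonnegative matrix has no zero row, hence positive row sums. *)
Lemma row_free_rowsum_gt0 m n (S : 'M[R]_(m, n)) :
  nonneg_mx S -> row_free S -> forall i, 0 < \sum_j S i j.
Proof.
move=> S_ge0 Sfree i; rewrite lt_def sumr_ge0 ?andbT //.
apply/negP => /eqP /(psumr_eq0P (fun j _ => S_ge0 i j)) Si0.
have : row i S = 0 *m S by apply/rowP => j; rewrite mul0mx !mxE Si0.
rewrite rowE => /(row_free_inj Sfree) /matrixP /(_ 0 i).
by rewrite !mxE !eqxx /= => /eqP; rewrite oner_eq0.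
Qed.

Lemma rank2_nonneg_cone n (S : 'M[R]_(2, n)) : nonneg_mx S -> row_free S ->
  exists P : 'M[R]_(2, n), nonneg_mx P /\
    forall w : 'rV[R]_n, nonneg_mx w -> (w <= S)%MS ->
      exists c : 'rV[R]_2, nonneg_mx c /\ w = c *m P.
Proof.
move=> S_ge0 Sfree.
have sum_gt0 := row_free_rowsum_gt0 S_ge0 Sfree.
set a := \sum_j S 0 j; set b := \sum_j S ord_max j.
have a_gt0 : 0 < a := sum_gt0 0; have b_gt0 : 0 < b := sum_gt0 ord_max.
have [a0 b0] : a != 0 /\ b != 0 by rewrite !gt_eqF.
set u := fun j => S 0 j / a; set v := fun j => S ord_max j / b.
have u_ge0 j : 0 <= u j by apply: divr_ge0; [exact: S_ge0 | exact: ltW].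
have v_ge0 j : 0 <= v j by apply: divr_ge0; [exact: S_ge0 | exact: ltW].
have u_sum : \sum_j u j = 1 by rewrite -mulr_suml mulfV.
have v_sum : \sum_j v j = 1 by rewrite -mulr_suml mulfV.
have u_neq_v : exists j, u j != v j.
  apply/not_existsP => uv.
  have : (\row_k (if k == 0 then b else - a)) *m S = 0 *m S.
    apply/rowP => j; rewrite mul0mx mulmx_row2 !mxE /=.
    have /negP/negPn := uv j; rewrite /u /v eqr_div // => /eqP; lra.
  by move=> /(row_free_inj Sfree) /rowP /(_ 0); rewrite !mxE /= => /eqP; rewrite gt_eqF.
have [lo [hi [lo_le0 hi_ge1 lo_ge0 hi_ge0 seg]]] := nonneg_segment u_ge0 v_ge0 u_sum v_sum u_neq_v.
exists (\matrix_(k, j) line_pt u v (if k == 0 then lo else hi) j); split.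
  by move=> k j; rewrite mxE; case: ifP.
move=> w w_ge0 /submxP [x w_xS]; rewrite w_xS in w_ge0 *.
have wE j : (x *m S) 0 j = (x 0 0 * a) * u j + (x 0 ord_max * b) * v j.
  by rewrite mulmx_row2 /u /v; field; apply/andP.
have comb_ge0 j : 0 <= x 0 0 * a * u j + x 0 ord_max * b * v j.
  by rewrite -wE; apply: w_ge0.
have [c1 [c2 [c1_ge0 c2_ge0 cE]]] :=
  segment_ends_generate u_sum v_sum lo_le0 hi_ge1 seg comb_ge0.
exists (\row_k (if k == 0 then c1 else c2)); split.
  by move=> i k; rewrite mxE; case: ifP.
by apply/rowP => j; rewrite wE [RHS]mulmx_row2 cE !mxE.
Qed.

Lemma nonneg_rowwise_factor m k n (M : 'M[R]_(m, n)) (P : 'M[R]_(k, n)) :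
  (forall i, exists c : 'rV[R]_k, nonneg_mx c /\ row i M = c *m P) ->
  exists X : 'M[R]_(m, k), nonneg_mx X /\ M = X *m P.
Proof.
move=> /fin_all_exists [f Hf].
exists (\matrix_(i, l) f i 0 l); split.
  by move=> i l; rewrite mxE; case: (Hf i) => + _; apply.
apply/row_matrixP => i; rewrite (proj2 (Hf i)) row_mul.
by congr (_ *m _); apply/rowP => l; rewrite !mxE.
Qed.

Lemma rank2_snt_fact n (A : 'M[R]_n) : SNn A -> \rank A = 2%N -> snt_fact A 2.
Proof.
move=> [AT A_ge0] rkA.
have [S [S_ge0 SA]] : exists S : 'M[R]_(2, n), nonneg_mx S /\ (S == A)%MS.
  by rewrite -rkA; apply: nonneg_row_basis.
have Sfree : row_free S by rewrite /row_free (eqmx_rank SA) rkA.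
have [P [P_ge0 P_cone]] := rank2_nonneg_cone S_ge0 Sfree.
have A_cone (w : 'rV_n) : nonneg_mx w -> (w <= A)%MS ->
    exists c : 'rV_2, nonneg_mx c /\ w = c *m P.
  by move=> w_ge0 wA; apply: P_cone => //; rewrite (eqmxP SA).
have [X [X_ge0 AX]] : exists X : 'M_(n, 2), nonneg_mx X /\ A = X *m P.
  apply: nonneg_rowwise_factor => i; apply: A_cone; last exact: row_sub.
  by move=> k j; rewrite mxE.
have Pfree : row_free P.
  by rewrite /row_free eqn_leq rank_leq_row /= -{1}rkA AX mxrankM_maxr.
have [Q PQ] := row_freeP Pfree.
have XQ : X = A *m Q by rewrite AX -mulmxA PQ mulmx1.
(* Since A is symmetric, every column of X = A Q is in the cone: X^T = Y P. *)
have [Y [Y_ge0 XY]] : exists Y : 'M_2, nonneg_mx Y /\ X^T = Y *m P.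
  apply: nonneg_rowwise_factor => k; apply: A_cone.
    by move=> i j; rewrite !mxE.
  by rewrite XQ trmx_mul AT row_mul submxMl.
have AY : A = P^T *m Y *m P by rewrite -AT {1}AX trmx_mul XY mulmxA.
have YQ : Y = Q^T *m A *m Q.
  by rewrite AY !mulmxA -trmx_mul PQ trmx1 mul1mx -mulmxA PQ mulmx1.
exists P^T, Y; split => //.
- by move=> i j; rewrite mxE.
- by rewrite YQ !trmx_mul trmxK AT mulmxA.
- by rewrite trmxK.
Qed.

End NonnegCone.

Theorem mainTheorem6 (R : realType) (n : nat) (A : 'M[R]_n) (HA : SNn A) :
  \rank A = 2%N -> st_plus HA = 2%N.
Proof.
move=> rkA; rewrite /st_plus; case: ex_minnP => k /asboolP k_fact k_min.
apply/eqP; rewrite eqn_leq; apply/andP; split.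
  by apply: k_min; apply/asboolP; exact: rank2_snt_fact.
by rewrite -rkA; exact: rank_le_snt_fact k_fact.
Qed.
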